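(* Let $f,f',g\in\mathbb{S}(\mathcal{H})$ with $f\ne-g$, $f'\ne-g$ and $d_{\mathbb{S}}(f,g)\le\frac\pi2$. Let $f_t=\Gamma(g,f,t)$ and $f'_t=\Gamma(g,f',t)$. Then $d_{\mathbb{S}}(f_t,f'_t)\le 2\,d_{\mathbb{S}}(f,f')$ for every $t\in[0,1]$.
   Context: $\mathcal{H}$ is a finite-dimensional complex Hermitian space (in the paper, the space of polynomial systems $H_{d_1}\times\dots\times H_{d_n}$ with the Weyl inner product), $\mathbb{S}(\mathcal{H})$ its unit sphere with the angular distance $d_{\mathbb{S}}(x,y)\in[0,\pi]$, $\cos d_{\mathbb{S}}(x,y)=\mathrm{Re}\langle x,y\rangle$. For $f\ne-g$ and $\alpha=d_{\mathbb{S}}(f,g)\in[0,\pi)$, $\Gamma(g,f,t)=\frac{\sin((1-t)\alpha)}{\sin\alpha}g+\frac{\sin(t\alpha)}{\sin\alpha}f$ (and $\Gamma(g,f,t)=g$ if $\alpha=0$) is the geodesic from $g$ to $f$. *)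

(* R : realType, the complex field is R[i] (mathcomp-real-closed),
   the finite-dimensional Hermitian space is C^n = 'rV[R[i]]_n. *)
From HB Require Import structures.
From mathcomp Require Import all_boot all_order all_algebra.
From mathcomp Require Import all_classical all_reals all_analysis.
From mathcomp Require Import complex.
Set Implicit Arguments. Unset Strict Implicit. Unset Printing Implicit Defensive.
Import Order.TTheory GRing.Theory Num.Theory.
Local Open Scope ring_scope.

Section Defs.
Context {R : realType} {n : nat}.
Local Open Scope complex_scope.

Definition hdot (x y : 'rV[R[i]]_n) : R[i] := \sum_(i < n) x ord0 i * (y ord0 i)^*.

Definition on_sphere (x : 'rV[R[i]]_n) : Prop := complex.Re (hdot x x) = 1.

Definition dS (x y : 'rV[R[i]]_n) : R := acos (complex.Re (hdot x y)).

Definition Gamma (g f : 'rV[R[i]]_n) (t : R) : 'rV[R[i]]_n :=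
  let a := dS f g in
  if a == 0 then g
  else ((sin ((1 - t) * a) / sin a)%:C *: g + (sin (t * a) / sin a)%:C *: f).
End Defs.

From HB Require Import structures.
From mathcomp Require Import all_boot all_order all_algebra.
From mathcomp Require Import all_classical all_reals all_analysis.
From mathcomp Require Import complex.
From mathcomp Require Import ring lra.
Import Order.TTheory GRing.Theory Num.Theory.
Local Open Scope ring_scope.

(* Let [a, b] be the distances from [g] to [f, f'].  Projecting [f, f'] onto
   the tangent space at [g] and applying Cauchy-Schwarz gives a spherical law
   of cosines [<f, f'> = cos a cos b + sin a sin b c] with [|c| <= 1], and
   [f_t, f'_t] obey the same law with [t a, t b] and the same [c].  Such an
   expression [X] satisfies
   [1 - X = (1 + c)/2 (1 - cos (a - b)) + (1 - c)/2 (1 - cos (a + b))], so the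
   claim reduces to [1 - cos (t x) <= 2 (1 - cos x)] for [|x| <= 3 pi / 2]. *)

Section SphericalTrigonometry.
Context {R : realType}.

Lemma spherical_cos_split (a b c : R) :
  cos a * cos b + sin a * sin b * c
  = (1 + c) / 2 * cos (a - b) + (1 - c) / 2 * cos (a + b).
Proof. by rewrite cosB cosD; field. Qed.

Lemma spherical_cos_bound (a b c : R) : -1 <= c <= 1 ->
  -1 <= cos a * cos b + sin a * sin b * c <= 1.
Proof.
move=> /andP[c0 c1]; rewrite spherical_cos_split.
have := cos_le1 (a - b); have := cos_le1 (a + b).
have := cos_geN1 (a - b); have := cos_geN1 (a + b).
by move=> *; apply/andP; split; nra.
Qed.

Lemma one_sub_cos_mul_le_nonneg (x t : R) :
  0 <= x <= pi + pi / 2 -> 0 <= t <= 1 -> 1 - cos (t * x) <= 2 * (1 - cos x).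
Proof.
move=> /andP[x0 x1] /andP[t0 t1]; have pi0 := @pi_gt0 R.
have [x_le_pi|pi_lt_x] := lerP x pi.
  have cos_le : cos x <= cos (t * x).
    rewrite leNgt ltr_cos -?leNgt; first nra.
      by rewrite in_itv /=; apply/andP; split; nra.
    by rewrite in_itv /=; apply/andP; split; nra.
  have := cos_le1 x; lra.
have cos_le0 : cos x <= 0.
  have -> : x = (x - pi) + pi by ring.
  by rewrite cosDpi oppr_le0 cos_ge0_pihalf //; apply/andP; split; lra.
have := cos_geN1 (t * x); lra.
Qed.

Lemma one_sub_cos_mul_le (x t : R) :
  - (pi + pi / 2) <= x <= pi + pi / 2 -> 0 <= t <= 1 ->
  1 - cos (t * x) <= 2 * (1 - cos x).
Proof.
move=> /andP[x0 x1] ht; have [x_ge0|x_lt0] := lerP 0 x.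
  by apply: one_sub_cos_mul_le_nonneg => //; apply/andP; split.
rewrite -cosN -(cosN x) -mulrN.
by apply: one_sub_cos_mul_le_nonneg => //; apply/andP; split; lra.
Qed.

(* If [X < 0] then [2 * acos X > pi >= acos Y]; otherwise
   [cos (2 * acos X) = 2 X^2 - 1 <= 2 X - 1 <= Y]. *)
Lemma acos_le_double (X Y : R) : -1 <= X <= 1 -> -1 <= Y <= 1 ->
  1 - Y <= 2 * (1 - X) -> acos Y <= 2 * acos X.
Proof.
move=> hX hY hXY; have pi0 := @pi_gt0 R.
have [[/andP[X0 Xpi] cX] [/andP[Y0 Ypi] cY]] := (acos_def hX, acos_def hY).
rewrite leNgt; apply/negP => lt_double.
have cos_double : cos (2 * acos X) = 2 * X ^+ 2 - 1.
  rewrite mulr2n mulrDl mul1r cosD cX.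
  by have := cos2Dsin2 (acos X); rewrite cX; lra.
have : cos (acos Y) < cos (2 * acos X).
  by rewrite ltr_cos // in_itv /=; apply/andP; split; lra.
rewrite cY cos_double => Y_lt; have X_lt0 : X < 0 by nra.
have : 0 <= cos (acos X) by apply: cos_ge0_pihalf; apply/andP; split; lra.
lra.
Qed.

Lemma spherical_acos_le (a b c t : R) : 0 <= a <= pi / 2 -> 0 <= b <= pi ->
  -1 <= c <= 1 -> 0 <= t <= 1 ->
  acos (cos (t * a) * cos (t * b) + sin (t * a) * sin (t * b) * c)
  <= 2 * acos (cos a * cos b + sin a * sin b * c).
Proof.
move=> /andP[a0 a1] /andP[b0 b1] hc ht; have pi0 := @pi_gt0 R.
have /andP[c0 c1] := hc.
apply: acos_le_double; rewrite ?spherical_cos_bound //.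
rewrite !spherical_cos_split -mulrBr -mulrDr.
(* [a <= pi / 2] is what keeps [a + b] within the range of [one_sub_cos_mul_le]. *)
have le_sub := @one_sub_cos_mul_le (a - b) t.
have le_add := @one_sub_cos_mul_le (a + b) t.
have /le_sub/(_ ht) : - (pi + pi / 2) <= a - b <= pi + pi / 2.
  by apply/andP; split; lra.
have /le_add/(_ ht) : - (pi + pi / 2) <= a + b <= pi + pi / 2.
  by apply/andP; split; lra.
have w1 : 0 <= (1 + c) / 2 by lra.
have w2 : 0 <= (1 - c) / 2 by lra.
nra.
Qed.

Lemma sqr_le_unit_scale (x p : R) : 0 <= p -> x ^+ 2 <= p ^+ 2 ->
  exists2 c, -1 <= c <= 1 & x = p * c.
Proof.
move=> p0 le_sqr; have [p_eq0|pn0] := eqVneq p 0.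
  move: le_sqr; rewrite p_eq0 expr0n /= => le0.
  exists 0; first lra.
  by apply/eqP; rewrite mulr0 -sqrf_eq0 eq_le sqr_ge0 andbT.
have p_gt0 : 0 < p by rewrite lt_def pn0.
exists (x / p); last by rewrite mulrC divfK.
have : (x / p) ^+ 2 <= 1 by rewrite expr_div_n ler_pdivrMr ?exprn_gt0 ?mul1r.
by move=> ?; apply/andP; split; nra.
Qed.

Lemma sin_acos_sqr (x : R) : -1 <= x <= 1 -> sin (acos x) ^+ 2 = 1 - x ^+ 2.
Proof.
move=> hx; rewrite sin_acos // sqr_sqrtr // subr_ge0.
by have /andP[? ?] := hx; nra.
Qed.

End SphericalTrigonometry.

Section RealInnerProduct.
Context {R : realType} {n : nat}.
Implicit Types (x y z : 'rV[R[i]]_n) (r : R).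

Definition rdot x y : R := complex.Re (hdot x y).

Lemma dSE x y : dS x y = acos (rdot x y).
Proof. by []. Qed.

Lemma Re_mul_conj (u v : R[i]) :
  complex.Re (u * (v^*)%C) = complex.Re u * complex.Re v + complex.Im u * complex.Im v.
Proof. by case: u => a b; case: v => c d /=; ring. Qed.

Lemma rdotE x y : rdot x y = \sum_(j < n) (complex.Re (x ord0 j) * complex.Re (y ord0 j)
                                          + complex.Im (x ord0 j) * complex.Im (y ord0 j)).
Proof.
rewrite /rdot /hdot; elim/big_rec2: _ => [//|j s u _ <-].
by rewrite -Re_mul_conj; case: (x ord0 j * _) => a b; case: u.
Qed.

Lemma rdotC x y : rdot x y = rdot y x.
Proof. by rewrite !rdotE; apply: eq_bigr => j _; ring. Qed.

Lemma rdotDl x y z : rdot (x + y) z = rdot x z + rdot y z.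
Proof.
rewrite !rdotE -big_split; apply: eq_bigr => j _ /=.
by rewrite !mxE; case: (x ord0 j) => ? ?; case: (y ord0 j) => ? ? /=; ring.
Qed.

Lemma rdotZl r x z : rdot (r%:C%C *: x) z = r * rdot x z.
Proof.
rewrite !rdotE mulr_sumr; apply: eq_bigr => j _ /=.
by rewrite !mxE; case: (x ord0 j) => ? ? /=; ring.
Qed.

Lemma rdotDr x y z : rdot z (x + y) = rdot z x + rdot z y.
Proof. by rewrite rdotC rdotDl !(rdotC z). Qed.

Lemma rdotZr r x z : rdot z (r%:C%C *: x) = r * rdot z x.
Proof. by rewrite rdotC rdotZl rdotC. Qed.

Lemma rdot0r x : rdot x 0 = 0.
Proof. by rewrite rdotE big1 // => j _; rewrite mxE /=; ring. Qed.

Lemma rdot_ge0 x : 0 <= rdot x x.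
Proof. by rewrite rdotE; apply: sumr_ge0 => j _; rewrite addr_ge0 // -expr2 sqr_ge0. Qed.

Lemma rdot_eq0 x : (rdot x x == 0) = (x == 0).
Proof.
apply/idP/eqP => [|->]; last by rewrite rdot0r.
rewrite rdotE psumr_eq0; last first.
  by move=> j _; rewrite addr_ge0 // -expr2 sqr_ge0.
move=> /allP x0; apply/rowP => j; rewrite !mxE.
have /x0 /= /eqP : j \in index_enum 'I_n by rewrite mem_index_enum.
case: (x ord0 j) => a b /= hab.
have a0 : a = 0 by nra.
have b0 : b = 0 by nra.
by rewrite a0 b0.
Qed.

Lemma rdot_Cauchy_Schwarz x y : rdot x y ^+ 2 <= rdot x x * rdot y y.
Proof.
have [y0|yn0] := eqVneq (rdot y y) 0.
  by move/eqP: y0; rewrite rdot_eq0 => /eqP ->; rewrite !rdot0r expr0n mulr0.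
have y_gt0 : 0 < rdot y y by rewrite lt_def yn0 rdot_ge0.
set r := - rdot x y / rdot y y.
have := mulr_ge0 (ltW y_gt0) (rdot_ge0 (x + r%:C%C *: y)).
rewrite rdotDl !rdotDr !rdotZl !rdotZr (rdotC y x).
have -> : rdot y y * (rdot x x + r * rdot x y + (r * rdot x y + r * (r * rdot y y)))
   = rdot x x * rdot y y - rdot x y ^+ 2 by rewrite /r; field.
lra.
Qed.

End RealInnerProduct.

Section UnitSphere.
Context {R : realType} {n : nat}.
Context {g : 'rV[R[i]]_n} (g_unit : rdot g g = 1).

Lemma unit_rdot_bound {f : 'rV[R[i]]_n} : rdot f f = 1 -> -1 <= rdot f g <= 1.
Proof.
move=> f_unit; have := rdot_Cauchy_Schwarz f g; rewrite f_unit g_unit mul1r => h.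
by apply/andP; split; nra.
Qed.

Lemma unit_rdot_gtN1 {f : 'rV[R[i]]_n} : rdot f f = 1 -> f != - g -> -1 < rdot f g.
Proof.
move=> f_unit f_neq; have /andP[ge _] := unit_rdot_bound f_unit.
rewrite lt_def ge andbT; apply: contra f_neq => /eqP fg.
have : rdot (f + g) (f + g) == 0.
  by rewrite rdotDl !rdotDr (rdotC g f) f_unit g_unit; apply/eqP; lra.
by rewrite rdot_eq0 addr_eq0.
Qed.

Definition tangent (f : 'rV[R[i]]_n) := f + (- rdot f g)%:C%C *: g.

Lemma rdot_tangent (f f' : 'rV[R[i]]_n) :
  rdot (tangent f) (tangent f') = rdot f f' - rdot f g * rdot f' g.
Proof. by rewrite /tangent rdotDl !rdotDr !rdotZl !rdotZr g_unit (rdotC g f'); ring. Qed.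

Lemma tangent_orthogonal (f : 'rV[R[i]]_n) : rdot (tangent f) g = 0.
Proof. by rewrite /tangent rdotDl rdotZl g_unit; ring. Qed.

Lemma tangent_rdot_sqr_le (f f' : 'rV[R[i]]_n) : rdot f f = 1 -> rdot f' f' = 1 ->
  (rdot f f' - rdot f g * rdot f' g) ^+ 2 <= (1 - rdot f g ^+ 2) * (1 - rdot f' g ^+ 2).
Proof.
move=> f_unit f'_unit; rewrite -rdot_tangent.
have := rdot_Cauchy_Schwarz (tangent f) (tangent f').
by rewrite !rdot_tangent f_unit f'_unit !expr2.
Qed.

Lemma Gamma_tangentE {f : 'rV[R[i]]_n} (t : R) : rdot f f = 1 -> f != - g ->
  exists2 B, Gamma g f t = (cos (t * dS f g))%:C%C *: g + B%:C%C *: tangent f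
           & B * sin (dS f g) = sin (t * dS f g).
Proof.
move=> f_unit f_neq; rewrite /Gamma; set a := dS f g.
have [a0|an0] := eqVneq a 0.
  exists 0; last by rewrite a0 mulr0 sin0 mul0r.
  by rewrite a0 mulr0 cos0 rmorph1 rmorph0 scale1r scale0r addr0.
have hf := unit_rdot_bound f_unit.
have [/andP[a_ge0 _] cos_a] := acos_def hf.
have a_ltpi : a < pi by apply: acos_ltpi; rewrite unit_rdot_gtN1 //; case/andP: hf.
have sin_a : 0 < sin a by apply: sin_gt0_pi; rewrite a_ltpi lt_def an0 a_ge0.
exists (sin (t * a) / sin a); last by rewrite divfK ?gt_eqF.
rewrite /tangent scalerDr scalerA -rmorphM addrCA -scalerDl -rmorphD addrC.
congr (_ *: g + _); congr (_%:C%C).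
have -> : (1 - t) * a = a - t * a by ring.
by rewrite sinB -[rdot f g]cos_a; field; rewrite gt_eqF.
Qed.

Lemma rdot_Gamma_spherical {f f' : 'rV[R[i]]_n} (t : R) :
  rdot f f = 1 -> rdot f' f' = 1 -> f != - g -> f' != - g ->
  exists2 c, -1 <= c <= 1 &
    rdot f f' = cos (dS f g) * cos (dS f' g) + sin (dS f g) * sin (dS f' g) * c /\
    rdot (Gamma g f t) (Gamma g f' t)
    = cos (t * dS f g) * cos (t * dS f' g) + sin (t * dS f g) * sin (t * dS f' g) * c.
Proof.
move=> f_unit f'_unit f_neq f'_neq; set a := dS f g; set b := dS f' g.
have hf := unit_rdot_bound f_unit; have hf' := unit_rdot_bound f'_unit.
have cos_a : cos a = rdot f g by rewrite acosK // in_itv.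
have cos_b : cos b = rdot f' g by rewrite acosK // in_itv.
have sin_a : 0 <= sin a by apply/sin_ge0_pi/andP; split; [exact: acos_ge0|exact: acos_lepi].
have sin_b : 0 <= sin b by apply/sin_ge0_pi/andP; split; [exact: acos_ge0|exact: acos_lepi].
have [c hc eq_c] : exists2 c, -1 <= c <= 1 &
    rdot f f' - rdot f g * rdot f' g = sin a * sin b * c.
  apply: sqr_le_unit_scale; first exact: mulr_ge0.
  by rewrite exprMn !sin_acos_sqr //; apply: tangent_rdot_sqr_le.
exists c => //; split; first by rewrite -eq_c cos_a cos_b; ring.
have [B -> sinB] := Gamma_tangentE t f_unit f_neq.
have [B' -> sinB'] := Gamma_tangentE t f'_unit f'_neq.
rewrite !rdotDl !rdotDr !rdotZl !rdotZr g_unit tangent_orthogonal.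
by rewrite (rdotC g) tangent_orthogonal rdot_tangent eq_c -sinB -sinB'; ring.
Qed.

End UnitSphere.

Theorem lemma2p5 (R : realType) (n : nat) (f f' g : 'rV[R[i]]_n) (t : R) :
  on_sphere f -> on_sphere f' -> on_sphere g ->
  f != - g -> f' != - g ->
  dS f g <= pi / 2 ->
  0 <= t <= 1 ->
  dS (Gamma g f t) (Gamma g f' t) <= 2 * dS f f'.
Proof.
move=> f_unit f'_unit g_unit f_neq f'_neq a_le ht.
have [c hc [eq_ff' eq_Gamma]] := rdot_Gamma_spherical g_unit t f_unit f'_unit f_neq f'_neq.
rewrite !dSE eq_Gamma eq_ff'.
have /acos_def[/andP[a_ge0 _] _] := unit_rdot_bound g_unit f_unit.
have /acos_def[b_bound _] := unit_rdot_bound g_unit f'_unit.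
by apply: spherical_acos_le => //; apply/andP.
Qed.
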